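(* Let $n, r, s, \ell$ be positive integers with $r+s+\ell \leq n$, and let $S_1 \subseteq \cdots \subseteq S_{\ell+1} \subseteq \mathbb{Z}_2^n$ be subspaces with $\dim S_j = r+j-1$. Fix any full column-rank matrix $\mathbf{A} \in \mathbb{Z}_2^{n \times (n-r)}$ such that $S_j^{\perp} = \mathrm{ColSpan}(\mathbf{A}^{[j:n-r]})$ for all $j \in [\ell+1]$. Then the following three distributions over tuples of subsets of $\mathbb{Z}_2^n$ are identical: 1. Sample a uniformly random $\mathbf{v} \in \mathbb{Z}_2^n \setminus S_{\ell+1}$ and output $(T_{1,1},\ldots,T_{\ell+1,1})$ with $T_{j,1} := S_j \cup (S_j + \mathbf{v})$. 2. Sample a uniformly random $\mathbf{v} \in \mathbb{Z}_2^n \setminus S_{\ell+1}$, compute $\mathbf{y} := \mathbf{v}^T \mathbf{A} \in \mathbb{Z}_2^{n-r}$, and output $(T_{1,2},\ldots,T_{\ell+1,2})$ with $T_{j,2} := \{\mathbf{w} \in \mathbb{Z}_2^n : \mathbf{w}^T \mathbf{A}^{[j:n-r]} = 0^{n-r-j+1} \text{ or } \mathbf{w}^T \mathbf{A}^{[j:n-r]} = \mathbf{y}_{[j:n-r]}\}$. 3. Sample a uniformly random $\mathbf{B} \in \mathbb{Z}_2^{(n-r-\ell)\times \ell}$, set $\mathbf{C} := \mathbf{A} \cdot \begin{bmatrix} \mathbf{I}_\ell & \mathbf{0} \\ \mathbf{B} & \mathbf{I}_{n-r-\ell}\end{bmatrix}$, sample a uniformly random $\mathbf{z} \in \mathbb{Z}_2^{n-r-\ell}\setminus\{0\}$,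 and output $(T_{1,3},\ldots,T_{\ell+1,3})$ with $T_{j,3} := \{\mathbf{w} \in \mathbb{Z}_2^n : \mathbf{w}^T \mathbf{C}^{[j:n-r]} = 0^{n-r-j+1} \text{ or } \mathbf{w}^T \mathbf{C}^{[j:n-r]} = 0^{\ell-j+1}\,\|\,\mathbf{z}\}$.
   Context: All linear algebra is over $\mathbb{Z}_2$. For a matrix $\mathbf{M}$, $\mathbf{M}^{[a:b]}$ denotes the submatrix consisting of columns $a$ through $b$ (inclusive), and $\mathbf{M}^{[a]}$ its $a$-th column; for a vector $\mathbf{y}$, $\mathbf{y}_{[a:b]}$ denotes the subvector of coordinates $a$ through $b$. $\mathrm{ColSpan}(\mathbf{M})$ is the column span. For a subspace $S\subseteq\mathbb{Z}_2^n$, $S^\perp := \{\mathbf{w} : \mathbf{w}^T\mathbf{s} = 0 \ \forall \mathbf{s}\in S\}$. $\|$ denotes concatenation; $[k]=\{1,\dots,k\}$. *)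

(* Z_2 = 'F_2, vectors of Z_2^n are row vectors 'rV['F_2]_n
   (so w^T M is written w *m M).  Subspaces of Z_2^n are represented, as in
   mxalgebra, by the row space of a matrix S : 'M['F_2]_n. *)
From mathcomp Require Import all_boot all_order all_algebra.
Set Implicit Arguments. Unset Strict Implicit. Unset Printing Implicit Defensive.
Import GRing.Theory.
Local Open Scope ring_scope.

Definition subsp_set (n : nat) (S : 'M['F_2]_n) : {set 'rV['F_2]_n} :=
  [set w : 'rV['F_2]_n | (w <= S)%MS].

Definition perp_set (n : nat) (S : 'M['F_2]_n) : {set 'rV['F_2]_n} :=
  [set w : 'rV['F_2]_n | [forall s : 'rV['F_2]_n, (s <= S)%MS ==> (w *m s^T == 0)]].

(* ColSpan(A^{[j0+1 : m]}) (columns with 0-based index >= j0), as row vectors: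
   linear combinations  sum_{k >= j0} c_k (A^{[k]})^T . *)
Definition colspan_from (n m : nat) (A : 'M['F_2]_(n, m)) (j0 : nat)
  : {set 'rV['F_2]_n} :=
  [set w : 'rV['F_2]_n | [exists c : 'rV['F_2]_m,
     [forall k : 'I_m, (k < j0)%N ==> (c 0 k == 0)] && (w == c *m A^T)]].

(* { w : w^T C^{[j0+1:m]} = 0  or  w^T C^{[j0+1:m]} = y_{[j0+1:m]} }  (0-based j0) *)
Definition Tset (n m : nat) (C : 'M['F_2]_(n, m)) (y : 'rV['F_2]_m) (j0 : nat)
  : {set 'rV['F_2]_n} :=
  [set w : 'rV['F_2]_n |
     [forall k : 'I_m, (j0 <= k)%N ==> ((w *m C) 0 k == 0)]
  || [forall k : 'I_m, (j0 <= k)%N ==> ((w *m C) 0 k == y 0 k)]].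

Definition lower_block (m l : nat) (h : (l <= m)%N) (B : 'M['F_2]_(m - l, l))
  : 'M['F_2]_m :=
  castmx (subnKC h, subnKC h) (block_mx 1%:M 0 B 1%:M).

Definition zero_cat (m l : nat) (h : (l <= m)%N) (z : 'rV['F_2]_(m - l))
  : 'rV['F_2]_m :=
  castmx (erefl 1%N, subnKC h) (row_mx (0 : 'rV['F_2]_l) z).

Definition unif_prob (D : finType) (O : eqType) (X : {set D}) (f : D -> O) (o : O)
  : rat :=
  (#|[set x in X | f x == o]|%:R / #|X|%:R)%R.

Lemma l_le_nr (n r s l : nat) : (r + s + l <= n)%N -> (l <= n - r)%N.
Proof. move=> h; rewrite leq_subRL; last by apply: leq_trans h; rewrite -addnA leq_addr.
  by apply: leq_trans h; rewrite -addnA leq_add2l leq_addl. Qed.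

(** All three outputs are pushforwards of the uniform distribution on the set
    [U] of vectors [u] in [Z_2^(n-r)] with nonzero tail [u_[l+1:n-r]] along the
    map [u |-> (Tset A u j)_j].  Since [S_j] is the common kernel of the columns
    [A^[j:n-r]], the coset [S_j + v] is cut out by [w^T A^[j:n-r] = y_[j:n-r]]
    with [y = v^T A], so the first two outputs agree, and [v |-> v^T A] maps the
    complement of [S_(l+1)] onto [U] with fibres of equal size (the cosets of
    the kernel of [A^T]).  For the third one, [w^T C = (w^T A) L_B] with the
    invertible block matrix [L_B], which preserves the vanishing of the last
    [n-r-j+1] coordinates for [j <= l+1]; pulling [0^l || z] back through [L_B]
    gives [-zB || z], and [(B, z) |-> -zB || z] again maps onto [U] with fibres
    of equal size, because [B |-> zB] is a surjective linear map for [z <> 0]. *)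
From mathcomp Require Import all_boot all_order all_algebra zify.
Import GRing.Theory Num.Theory.
Local Open Scope ring_scope.
Set Implicit Arguments. Unset Strict Implicit.

Lemma card_preim_constant_fibres (D E : finType) (X : {set D}) (U : {set E})
    (phi : D -> E) (k : nat) :
    {in U, forall e, #|[set x in X | phi x == e]| = k} ->
  forall Q : pred E,
  #|[set x in X | (phi x \in U) && Q (phi x)]| = (k * #|[set e in U | Q e]|)%N.
Proof.
move=> fibU Q; rewrite -sum1dep_card.
rewrite (partition_big phi (fun e => (e \in U) && Q e)) /=; last by move=> x /andP[].
rewrite (eq_bigr (fun _ => k)); last first.
  move=> e /andP[eU Qe]; rewrite sum1dep_card -(fibU e eU); apply: eq_card => x.
  by rewrite !inE; case: eqP => [->|]; rewrite ?eU ?Qe ?andbT ?andbF.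
rewrite sum_nat_const mulnC; congr (_ * _)%N.
by apply: eq_card => e; rewrite inE.
Qed.

Lemma unif_prob_comp (D E : finType) (O : eqType) (X : {set D}) (U : {set E})
    (phi : D -> E) (f : D -> O) (g : E -> O) (k : nat) :
    (0 < k)%N -> {in X, forall x, phi x \in U} ->
    {in X, forall x, f x = g (phi x)} ->
    {in U, forall e, #|[set x in X | phi x == e]| = k} ->
  unif_prob X f =1 unif_prob U g.
Proof.
move=> k_gt0 phiXU fg fibU o; rewrite /unif_prob.
have cardE := card_preim_constant_fibres fibU.
have -> : [set x in X | f x == o] = [set x in X | (phi x \in U) && (g (phi x) == o)].
  by apply/setP => x; rewrite !inE; case xX: (x \in X); rewrite //= phiXU ?fg.
have {2}-> : X = [set x in X | (phi x \in U) && true].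
  by apply/setP => x; rewrite !inE; case xX: (x \in X); rewrite //= phiXU.
rewrite (cardE (fun e => g e == o)) (cardE xpredT).
have -> : [set e in U | true] = U by apply/setP => e; rewrite !inE andbT.
by rewrite !natrM -mulf_div divff ?mul1r // pnatr_eq0 -lt0n.
Qed.

Section SurjectiveAdditive.

Variables (D E : finZmodType) (phi : {additive D -> E}).
Hypothesis phi_surj : forall e, exists x, phi x = e.

Lemma card_additive_fiber (e : E) : #|[set x | phi x == e]| = (#|D| %/ #|E|)%N.
Proof.
pose K := [set x | phi x == 0].
have fiberE e' : #|[set x | phi x == e']| = #|K|.
  have [x0 <-] := phi_surj e'.
  have -> : [set x | phi x == phi x0] = [set x + x0 | x in K].
    apply/setP => y; rewrite inE; apply/eqP/imsetP => [phiy | [x]].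
      by exists (y - x0); rewrite ?subrK // inE raddfB phiy subrr.
    by rewrite inE => /eqP phix ->; rewrite raddfD phix add0r.
  by rewrite card_imset //; apply: addIr.
have cardD : #|D| = (#|E| * #|K|)%N.
  have fibT : {in setT, forall e', #|[set x in setT | phi x == e']| = #|K|}.
    by move=> e' _; rewrite -(fiberE e'); apply: eq_card => x; rewrite !inE.
  move: (card_preim_constant_fibres fibT xpredT).
  have DT : [set x in [set: D] | (phi x \in [set: E]) && true] = setT.
    by apply/setP => x; rewrite !inE.
  have ET : [set e' in [set: E] | true] = setT by apply/setP => x; rewrite !inE.
  by rewrite DT ET !cardsT mulnC.
by rewrite fiberE cardD mulKn // -cardsT; apply/card_gt0P; exists 0; rewrite inE.
Qed.

Lemma card_additive_quotient_gt0 : (0 < #|D| %/ #|E|)%N.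
Proof. by rewrite -(card_additive_fiber 0); apply/card_gt0P; exists 0; rewrite inE raddf0. Qed.

End SurjectiveAdditive.

Definition vanish_from (R : zmodType) (m j : nat) (u : 'rV[R]_m) : bool :=
  [forall k : 'I_m, (j <= k)%N ==> (u 0 k == 0)].

Lemma TsetE (n m : nat) (C : 'M['F_2]_(n, m)) (y : 'rV['F_2]_m) (j : nat) :
  Tset C y j = [set w | vanish_from j (w *m C) || vanish_from j (w *m C - y)].
Proof.
apply/setP => w; rewrite !inE; congr (_ || _).
by apply: eq_forallb => k; rewrite !mxE subr_eq0.
Qed.

Lemma vanish_from_row_mx (R : zmodType) (l p j : nat) (a : 'rV[R]_l) (b : 'rV[R]_p) :
  (j <= l)%N -> vanish_from j (row_mx a b) = vanish_from j a && (b == 0).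
Proof.
move=> jl; apply/forallP/andP => [van | [/forallP vana /eqP ->] k].
  split.
    by apply/forallP => k; have := van (lshift p k); rewrite /= row_mxEl.
  apply/eqP/rowP => k; have := van (rshift l k); rewrite /= row_mxEr mxE.
  by rewrite (leq_trans jl (leq_addr _ _)) => /eqP.
rewrite -[k]splitK; case: (split k) => k' /=; apply/implyP => jk.
  by rewrite row_mxEl; move/implyP: (vana k'); apply.
by rewrite row_mxEr mxE.
Qed.

Definition proj_from {R : nzRingType} (m j : nat) : 'M[R]_m :=
  diag_mx (\row_(k < m) ((j <= k)%N)%:R).

Lemma mul_proj_from_eq0 (R : nzRingType) (m j : nat) (u : 'rV[R]_m) :
  (u *m proj_from m j == 0) = vanish_from j u.
Proof.
apply/eqP/forallP => [uP0 k | van].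
  apply/implyP => jk; move/rowP: uP0 => /(_ k).
  by rewrite mul_mx_diag !mxE jk mulr1 => ->.
apply/rowP => k; rewrite mul_mx_diag !mxE.
by case: leqP => jk; [move/implyP: (van k) => /(_ jk) /eqP ->; rewrite mul0r | rewrite mulr0].
Qed.

Lemma perp_setE (n : nat) (S : 'M['F_2]_n) :
  perp_set S = [set w | (w <= kermx S^T)%MS].
Proof.
apply/setP => w; rewrite !inE sub_kermx; apply/forallP/eqP => [wS | wS s].
  apply: trmx_inj; rewrite trmx_mul trmxK trmx0; apply/row_matrixP => i.
  have /eqP ws := implyP (wS (row i S)) (row_sub i S).
  by rewrite row_mul row0 -[row i S *m _]trmxK trmx_mul trmxK ws trmx0.
by apply/implyP => /submxP[x ->]; rewrite trmx_mul mulmxA wS mul0mx.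
Qed.

Lemma colspan_fromE (n m : nat) (A : 'M['F_2]_(n, m)) (j : nat) :
  colspan_from A j = [set w | (w <= proj_from m j *m A^T)%MS].
Proof.
apply/setP => w; rewrite !inE; apply/existsP/idP => [[c /andP[/forallP c0 /eqP ->]] | ].
  suff -> : c = c *m proj_from m j by rewrite -mulmxA submxMl.
  apply/rowP => k; rewrite mul_mx_diag !mxE.
  by case: leqP => jk; [rewrite mulr1 | move/implyP: (c0 k) => /(_ jk) /eqP ->; rewrite mul0r].
case/submxP => x ->; exists (x *m proj_from m j); rewrite mulmxA eqxx andbT.
apply/forallP => k; apply/implyP => kj.
by rewrite mul_mx_diag !mxE leqNgt kj mulr0.
Qed.

Lemma submx_of_rowsets (F : finFieldType) (n a b : nat) (M : 'M[F]_(a, n))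
    (N : 'M[F]_(b, n)) :
  [set w : 'rV_n | (w <= M)%MS] = [set w | (w <= N)%MS] -> (M <= N)%MS.
Proof.
move=> MN; apply/row_subP => i.
have : row i M \in [set w : 'rV_n | (w <= M)%MS] by rewrite inE row_sub.
by rewrite MN inE.
Qed.

(* [S] lies in the common kernel of the columns [A^[j:m]], and both have
   dimension [n - rank S^perp]. *)
Lemma sub_perp_colspanE (n m : nat) (S : 'M['F_2]_n) (A : 'M['F_2]_(n, m)) (j : nat) :
  perp_set S = colspan_from A j ->
  forall w : 'rV['F_2]_n, (w <= S)%MS = vanish_from j (w *m A).
Proof.
rewrite perp_setE colspan_fromE => SA w.
have sPK := submx_of_rowsets SA; have sKP := submx_of_rowsets (esym SA).
have sSK : (S <= kermx (A *m proj_from m j))%MS.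
  move: sKP; rewrite !sub_kermx => /eqP SP0; apply/eqP/trmx_inj.
  by rewrite trmx0 !trmx_mul tr_diag_mx.
have rankAP : \rank (A *m proj_from m j) = (n - \rank S)%N.
  rewrite -mxrank_tr trmx_mul tr_diag_mx.
  have -> : \rank (proj_from m j *m A^T) = \rank (kermx S^T).
    by apply/eqmx_rank/andP.
  by rewrite mxrank_ker mxrank_tr.
have eqSK : (S == kermx (A *m proj_from m j))%MS.
  by rewrite -(mxrank_leqif_eq sSK).2 mxrank_ker rankAP subKn // rank_leq_col.
by rewrite (eqmxP eqSK) sub_kermx mulmxA mul_proj_from_eq0.
Qed.

Lemma subsp_coset_Tset (n m : nat) (S : 'M['F_2]_n) (A : 'M['F_2]_(n, m))
    (j : nat) (v : 'rV['F_2]_n) :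
  perp_set S = colspan_from A j ->
  subsp_set S :|: [set x + v | x in subsp_set S] = Tset A (v *m A) j.
Proof.
move=> SA; rewrite TsetE; apply/setP => w; rewrite !inE.
have -> : (w \in [set x + v | x in subsp_set S]) = (w - v <= S)%MS.
  apply/imsetP/idP => [[x] | wvS]; first by rewrite inE => xS ->; rewrite addrK.
  by exists (w - v); rewrite ?inE ?subrK.
by rewrite !(sub_perp_colspanE SA) mulmxBl.
Qed.

Lemma row_free_mulmx_surj (R : fieldType) (p l : nat) (z : 'rV[R]_p) :
  z != 0 -> forall t : 'rV[R]_l, exists B, z *m B = t.
Proof.
move=> z0 t; have /row_freeP[C zC1] : row_free z by rewrite /row_free rank_rV z0.
by exists (C *m t); rewrite mulmxA zC1 mul1mx.
Qed.

Section LowerBlock.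

Variables (m l : nat) (h : (l <= m)%N).

(* Since [lower_block B] has inverse [lower_block (-B)], this is the unique
   preimage of [zero_cat z] under right multiplication by [lower_block B]. *)
Definition pre_zero_cat (B : 'M['F_2]_(m - l, l)) (z : 'rV['F_2]_(m - l)) : 'rV['F_2]_m :=
  castmx (erefl 1%N, subnKC h) (row_mx (- (z *m B)) z).

Lemma pre_zero_catK (B : 'M['F_2]_(m - l, l)) (z : 'rV['F_2]_(m - l)) :
  pre_zero_cat B z *m lower_block h B = zero_cat h z.
Proof.
rewrite /zero_cat /pre_zero_cat /lower_block; move: B z (subnKC h).
move: (m - l)%N => p B z e; subst m; rewrite !castmx_id.
by rewrite mul_row_block !mulmx1 mulmx0 add0r addNr.
Qed.

Lemma vanish_from_mul_lower_block (B : 'M['F_2]_(m - l, l)) (x : 'rV['F_2]_m) (j : nat) :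
  (j <= l)%N -> vanish_from j (x *m lower_block h B) = vanish_from j x.
Proof.
move=> jl; rewrite /lower_block; move: B (subnKC h).
move: (m - l)%N => p B e; subst m; rewrite castmx_id.
rewrite -(hsubmxK x) mul_row_block !mulmx1 mulmx0 add0r !vanish_from_row_mx //.
by case: eqP => [->|]; rewrite ?andbF // mul0mx addr0.
Qed.

Lemma vanish_from_pre_zero_cat (B : 'M['F_2]_(m - l, l)) (z : 'rV['F_2]_(m - l)) :
  vanish_from l (pre_zero_cat B z) = (z == 0).
Proof.
rewrite /pre_zero_cat; move: B z (subnKC h).
move: (m - l)%N => p B z e; subst m; rewrite castmx_id vanish_from_row_mx //.
by rewrite andb_idl // => _; apply/forallP => k; rewrite leqNgt ltn_ord.
Qed.

Lemma card_pre_zero_cat_fiber (u : 'rV['F_2]_m) : ~~ vanish_from l u ->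
  #|[set q : 'M_(m - l, l) * 'rV_(m - l) | (q.2 != 0) && (pre_zero_cat q.1 q.2 == u)]|
  = (#|{: 'M['F_2]_(m - l, l)}| %/ #|{: 'rV['F_2]_l}|)%N.
Proof.
rewrite /pre_zero_cat; move: (subnKC h); move: (m - l)%N => p e; subst m.
rewrite -(hsubmxK u); move: (lsubmx u) (rsubmx u) => t z.
rewrite vanish_from_row_mx // => tz; have {tz} z0 : z != 0.
  by apply: contra tz => /eqP ->; rewrite eqxx andbT; apply/forallP => k; rewrite leqNgt ltn_ord.
have -> : [set q : 'M_(p, l) * 'rV_p | (q.2 != 0) &&
     (castmx (erefl 1%N, erefl (l + p)%N) (row_mx (- (q.2 *m q.1)) q.2) == row_mx t z)]
   = [set (B, z) | B in [set B : 'M_(p, l) | mulmx z B == - t]].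
  apply/setP => [[B z']]; rewrite inE castmx_id /=; apply/andP/imsetP.
    by case=> _ /eqP/eq_row_mx[<- ->]; exists B; rewrite ?inE ?opprK.
  by case=> B' /[!inE] /eqP zB [-> ->]; rewrite zB opprK.
rewrite card_imset; last by move=> B1 B2 [].
exact: (card_additive_fiber (phi := mulmx z) (row_free_mulmx_surj z0)).
Qed.

End LowerBlock.

Lemma Tset_mul_lower_block (n m l : nat) (h : (l <= m)%N) (A : 'M['F_2]_(n, m))
    (B : 'M['F_2]_(m - l, l)) (z : 'rV['F_2]_(m - l)) (j : nat) :
  (j <= l)%N -> Tset (A *m lower_block h B) (zero_cat h z) j = Tset A (pre_zero_cat h B z) j.
Proof.
move=> jl; rewrite !TsetE -(pre_zero_catK h B z); apply/setP => w.
by rewrite !inE !mulmxA -mulmxBl !vanish_from_mul_lower_block.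
Qed.

Lemma unif_prob_mulmxr (n m j : nat) (S : 'M['F_2]_n) (A : 'M['F_2]_(n, m))
    (O : eqType) (f : 'rV['F_2]_n -> O) (g : 'rV['F_2]_m -> O) :
    row_full A -> perp_set S = colspan_from A j ->
    {in [set v | ~~ (v <= S)%MS], forall v, f v = g (v *m A)} ->
  unif_prob [set v | ~~ (v <= S)%MS] f =1 unif_prob [set u | ~~ vanish_from j u] g.
Proof.
move=> fullA SA fg.
have A_surj (u : 'rV_m) : exists v, mulmxr A v = u.
  by have /submxP[v ->] := submx_full u fullA; exists v.
apply: (unif_prob_comp (phi := mulmxr A) (card_additive_quotient_gt0 A_surj) _ fg).
- by move=> v; rewrite !inE (sub_perp_colspanE SA).
move=> u; rewrite inE => uU; rewrite -(card_additive_fiber A_surj u).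
apply: eq_card => v; rewrite !inE andb_idl // => /eqP vAu.
by rewrite (sub_perp_colspanE SA) -[v *m A]/(mulmxr A v) vAu.
Qed.

Lemma unif_prob_pre_zero_cat (m l : nat) (h : (l <= m)%N) (O : eqType)
    (f : 'M['F_2]_(m - l, l) * 'rV['F_2]_(m - l) -> O) (g : 'rV['F_2]_m -> O) :
    (l < m)%N -> {in [set q | q.2 != 0], forall q, f q = g (pre_zero_cat h q.1 q.2)} ->
  unif_prob [set q | q.2 != 0] f =1 unif_prob [set u | ~~ vanish_from l u] g.
Proof.
move=> lm fg.
have ml_gt0 : (0 < m - l)%N by rewrite subn_gt0.
have one0 : const_mx 1 != 0 :> 'rV['F_2]_(m - l).
  by apply/eqP => /rowP/(_ (Ordinal ml_gt0)); rewrite !mxE => /eqP; rewrite oner_eq0.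
have k_gt0 := card_additive_quotient_gt0 (row_free_mulmx_surj (l := l) one0).
apply: (unif_prob_comp (phi := fun q => pre_zero_cat h q.1 q.2) k_gt0 _ fg).
- by move=> q; rewrite !inE vanish_from_pre_zero_cat.
move=> u; rewrite inE => uU; rewrite -(card_pre_zero_cat_fiber h uU).
by apply: eq_card => q; rewrite !inE.
Qed.

Theorem mainTheorem1 (n r s l : nat)
  (hn : (0 < n)%N) (hr : (0 < r)%N) (hs : (0 < s)%N) (hl : (0 < l)%N)
  (hrsl : (r + s + l <= n)%N)
  (S : 'I_l.+1 -> 'M['F_2]_n)
  (hSnest : forall i j : 'I_l.+1, (i <= j)%N -> (S i <= S j)%MS)
  (hSdim : forall j : 'I_l.+1, \rank (S j) = (r + j)%N)
  (A : 'M['F_2]_(n, n - r))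
  (hA : \rank A = (n - r)%N)
  (hAperp : forall j : 'I_l.+1, perp_set (S j) = colspan_from A j) :
  let X12 := [set v : 'rV['F_2]_n | ~~ (v <= S ord_max)%MS] in
  let f1 := fun v : 'rV['F_2]_n =>
    [ffun j : 'I_l.+1 => subsp_set (S j) :|: [set x + v | x in subsp_set (S j)]] in
  let f2 := fun v : 'rV['F_2]_n =>
    [ffun j : 'I_l.+1 => Tset A (v *m A) j] in
  let X3 := [set p : 'M['F_2]_(n - r - l, l) * 'rV['F_2]_(n - r - l) | p.2 != 0] in
  let f3 := fun p : 'M['F_2]_(n - r - l, l) * 'rV['F_2]_(n - r - l) =>
    let C := A *m lower_block (l_le_nr hrsl) p.1 in
    [ffun j : 'I_l.+1 => Tset C (zero_cat (l_le_nr hrsl) p.2) j] in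
  (forall o, unif_prob X12 f1 o = unif_prob X12 f2 o) /\
  (forall o, unif_prob X12 f1 o = unif_prob X3 f3 o).
Proof.
move=> X12 f1 f2 X3 f3.
pose g (u : 'rV['F_2]_(n - r)) := [ffun j : 'I_l.+1 => Tset A u j].
have fullA : row_full A by rewrite /row_full hA.
have f1_push : unif_prob X12 f1 =1 unif_prob [set u | ~~ vanish_from l u] g.
  apply: (unif_prob_mulmxr fullA (hAperp ord_max)) => v _.
  by apply/ffunP => j; rewrite !ffunE (subsp_coset_Tset _ (hAperp j)).
split=> o; rewrite f1_push.
  by rewrite (unif_prob_mulmxr (g := g) fullA (hAperp ord_max)).
rewrite (unif_prob_pre_zero_cat (g := g) (h := l_le_nr hrsl)) //.
  by move: (hrsl) hs; lia.
move=> q _; apply/ffunP => j; rewrite !ffunE Tset_mul_lower_block //.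
by rewrite -ltnS.
Qed.
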